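(* Let $(\mathcal{X},\mathcal{F},\mu)$ be a probability space, let $(\mathcal{M},\mathfrak{M})$ be a measurable space, and let $f\colon \mathcal{X}\times\mathcal{X}\to\mathcal{M}$ be a measurable function. Assume $f$ is antisymmetric in the following sense: there is a measurable map $i\colon\mathcal{M}\to\mathcal{M}$ with $i(i(m))=m$ for every $m\in\mathcal{M}$ and $f(x,y)=i(f(y,x))$ for all $x,y\in\mathcal{X}$. Let $X$ and $Y$ be independent random variables with law $\mu$ and put $F=f(X,Y)$. (1) If $F$ and $Y$ are independent, then $X$ and $F$ are also independent; hence $X$, $Y$, $F$ are pairwise independent. (2) If $X$ and $F$ are independent, then $F$ and $Y$ are also independent; hence $X$, $Y$, $F$ are pairwise independent. Moreover, whenever $X,Y,F$ are pairwise independent (in particular in cases (1) and (2)), the following hold: (Hex$'$) for every balanced decomposition $(\mu_0,\mu_1)$ of $\mu$, if for $i=0,1$ the pair $(X_i,Y_i)$ consists of independent random variables each of law $\mu_i$ and $F_i=f(X_i,Y_i)$, then $F_0$ and $F_1$ have the same distribution on $\mathcal{M}$; (Hex$''$) for any two balanced decompositions $(\mu_0,\mu_1)$ and $(\nu_0,\nu_1)$ of $\mu$, if for $i=0,1$, $X_i$ has law $\mu_i$, $Y_i$ has law $\nu_i$, $X_i$ and $Y_i$ are independent, and $F_i=f(X_i,Y_i)$, then $F_0$ and $F_1$ have the same distribution on $\mathcal{M}$.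
   Context: A balanced decomposition of a probability measure $\mu$ is a pair $(\mu_0,\mu_1)$ of probability measures on the same space such that $\mu_0+\mu_1=2\mu$. Random variables $X,Y,F$ are pairwise independent if each of the pairs $(X,Y)$, $(X,F)$, $(Y,F)$ is independent. *)

From HB Require Import structures.
From mathcomp Require Import all_boot all_order all_algebra.
From mathcomp Require Import all_classical all_reals all_analysis.
Set Implicit Arguments. Unset Strict Implicit. Unset Printing Implicit Defensive.
Import Order.TTheory GRing.Theory Num.Theory.
Local Open Scope classical_set_scope.
Local Open Scope ring_scope.
Local Open Scope ereal_scope.

Definition indep2 (R : realType) (d : measure_display) (O : measurableType d)
  (P : probability O R) (d1 d2 : measure_display)
  (T1 : measurableType d1) (T2 : measurableType d2)
  (X : O -> T1) (Y : O -> T2) : Prop :=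
  forall A B, measurable A -> measurable B ->
    P (X @^-1` A `&` Y @^-1` B) = P (X @^-1` A) * P (Y @^-1` B).

Definition pairwise_indep3 (R : realType) (d : measure_display)
  (O : measurableType d) (P : probability O R)
  (d1 d2 d3 : measure_display) (T1 : measurableType d1)
  (T2 : measurableType d2) (T3 : measurableType d3)
  (X : O -> T1) (Y : O -> T2) (F : O -> T3) : Prop :=
  [/\ indep2 P X Y, indep2 P X F & indep2 P Y F].

Definition has_law (R : realType) (d : measure_display) (O : measurableType d)
  (P : probability O R) (d1 : measure_display) (T : measurableType d1)
  (X : O -> T) (mu : probability T R) : Prop :=
  forall A, measurable A -> P (X @^-1` A) = mu A.

Definition same_law (R : realType) (e0 e1 : measure_display)
  (O0 : measurableType e0) (O1 : measurableType e1)
  (P0 : probability O0 R) (P1 : probability O1 R)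
  (d : measure_display) (M : measurableType d)
  (F0 : O0 -> M) (F1 : O1 -> M) : Prop :=
  forall B, measurable B -> P0 (F0 @^-1` B) = P1 (F1 @^-1` B).

Definition balanced_decomp (R : realType) (d : measure_display)
  (T : measurableType d) (mu mu0 mu1 : probability T R) : Prop :=
  forall A, measurable A -> mu0 A + mu1 A = 2%:E * mu A.

(* Since X and Y are i.i.d., (X, Y) and (Y, X) have the same law; by antisymmetry
   of f this identifies the law of (X, F) with that of (Y, i o F), which exchanges
   the independence hypotheses of (1) and (2).
   For (Hex'') fix B, put E := f^-1 B and c := (mu \x mu) E = P (F \in B).
   Independence of X and F (resp. of Y and F) says that mu-almost every x-section
   (resp. y-section) of E has mu-measure c.  The parts of a balanced decomposition
   are dominated by mu, hence (mu \x nu0) E = (mu1 \x mu) E = c, and since the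
   product measure is additive in each factor,
   (mu0 \x nu0) E + (mu1 \x nu0) E = 2 c = (mu1 \x nu0) E + (mu1 \x nu1) E. *)

From HB Require Import structures.
From mathcomp Require Import all_boot all_order all_algebra.
From mathcomp Require Import all_classical all_reals all_analysis.
From mathcomp Require Import measurable_realfun.
Import Order.TTheory GRing.Theory Num.Theory.
Local Open Scope classical_set_scope.
Local Open Scope ring_scope.
Local Open Scope ereal_scope.
Set Implicit Arguments. Unset Strict Implicit. Unset Printing Implicit Defensive.

Lemma measurable_preimage d1 d2 (T1 : measurableType d1) (T2 : measurableType d2)
  (g : T1 -> T2) (B : set T2) :
  measurable_fun setT g -> measurable B -> measurable (g @^-1` B).
Proof. by move=> mg mB; rewrite -[g @^-1` B]setTI; exact: mg. Qed.

Lemma integral_ae_cst (R : realType) d (T : measurableType d)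
  (nu : probability T R) (mu : {measure set T -> \bar R}) (h : T -> \bar R) (k : \bar R) :
  nu `<< mu -> measurable_fun setT h -> ae_eq mu setT h (cst k) ->
  \int[nu]_x h x = k.
Proof.
move=> numu mh /(null_dominates_ae_eq measurableT numu) hk.
rewrite (ae_eq_integral (cst k))// integral_cst//.
by rewrite -[RHS]mule1 -(probability_setT nu).
Qed.

Section product_measure_sections.
Context (R : realType) d1 d2 (T1 : measurableType d1) (T2 : measurableType d2).
Implicit Types (E : set (T1 * T2)).

Lemma product_measure_ysectionE (m1 : probability T1 R) (m2 : probability T2 R) E :
  measurable E -> (m1 \x m2) E = \int[m2]_y m1 (ysection E y).
Proof.
move=> mE; apply: (@product_measure_unique _ _ _ _ _ m1 m2 (m1 \x^ m2)) => //.
exact: product_measure2E.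
Qed.

Lemma product_measure_ae_xsection (m1 : probability T1 R) (m2 : probability T2 R)
  (mu : {measure set T1 -> \bar R}) E c : measurable E ->
  m1 `<< mu -> ae_eq mu setT (fun x => m2 (xsection E x)) (cst c) ->
  (m1 \x m2) E = c.
Proof.
move=> mE m1mu hc; rewrite /product_measure1 /=.
by apply: integral_ae_cst m1mu _ hc; exact: measurable_fun_xsection.
Qed.

Lemma product_measure_ae_ysection (m1 : probability T1 R) (m2 : probability T2 R)
  (mu : {measure set T2 -> \bar R}) E c : measurable E ->
  m2 `<< mu -> ae_eq mu setT (fun y => m1 (ysection E y)) (cst c) ->
  (m1 \x m2) E = c.
Proof.
move=> mE m2mu hc; rewrite product_measure_ysectionE//.
by apply: integral_ae_cst m2mu _ hc; exact: measurable_fun_ysection.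
Qed.

Lemma ae_xsection_cst (m1 : probability T1 R) (m2 : probability T2 R) E :
  measurable E ->
  (forall A, measurable A -> (m1 \x m2) (E `&` A `*` setT) = m1 A * (m1 \x m2) E) ->
  ae_eq m1 setT (fun x => m2 (xsection E x)) (cst ((m1 \x m2) E)).
Proof.
move=> mE indepE; apply: integral_ae_eq => //.
- apply: (@le_integrable _ _ _ _ _ measurableT _ (EFin \o cst 1%R)).
  + exact: measurable_fun_xsection.
  + move=> x _ /=; rewrite gee0_abs// ger0_norm//.
    exact: probability_le1 (measurable_xsection _ _).
  + exact: finite_measure_integrable_cst.
- move=> A _ mA; rewrite integral_cst// muleC -indepE// integral_mkcond.
  apply: eq_integral => x _ /=; rewrite patchE xsectionI.
  case: ifPn => xA /=.
  + by rewrite in_xsectionX// setIT.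
  + by rewrite notin_xsectionX// setI0 measure0.
Qed.

Lemma ae_ysection_cst (m1 : probability T1 R) (m2 : probability T2 R) E :
  measurable E ->
  (forall A, measurable A -> (m1 \x m2) (E `&` setT `*` A) = m2 A * (m1 \x m2) E) ->
  ae_eq m2 setT (fun y => m1 (ysection E y)) (cst ((m1 \x m2) E)).
Proof.
move=> mE indepE; apply: integral_ae_eq => //.
- apply: (@le_integrable _ _ _ _ _ measurableT _ (EFin \o cst 1%R)).
  + exact: measurable_fun_ysection.
  + move=> y _ /=; rewrite gee0_abs// ger0_norm//.
    exact: probability_le1 (measurable_ysection _ _).
  + exact: finite_measure_integrable_cst.
- move=> A _ mA; rewrite integral_cst// muleC -indepE//.
  rewrite product_measure_ysectionE; last by apply: measurableI => //; exact: measurableX.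
  rewrite integral_mkcond; apply: eq_integral => y _; rewrite patchE ysectionI.
  case: ifPn => yA /=.
  + by rewrite in_ysectionX// setIT.
  + by rewrite notin_ysectionX// setI0 measure0.
Qed.

End product_measure_sections.

Section balanced_decomposition.
Context (R : realType) d (T : measurableType d) (mu mu0 mu1 : probability T R).
Hypothesis mu01 : balanced_decomp mu mu0 mu1.

Lemma balanced_decompC : balanced_decomp mu mu1 mu0.
Proof. by move=> A mA; rewrite addeC mu01. Qed.

Lemma balanced_decomp_dominates : mu0 `<< mu.
Proof.
apply/null_content_dominatesP => A mA muA0; apply/eqP.
by rewrite eq_le measure_ge0 andbT -(mule0 2%:E) -muA0 -mu01// leeDl.
Qed.

Context d' (T' : measurableType d') (nu : probability T' R).

Lemma product_measure_balanced_l (E : set (T * T')) : measurable E ->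
  (mu0 \x nu) E + (mu1 \x nu) E = 2%:E * (mu \x nu) E.
Proof.
move=> mE; rewrite !product_measure_ysectionE//.
rewrite -ge0_integralD//; [|exact: measurable_fun_ysection..].
rewrite -ge0_integralZl//; last exact: measurable_fun_ysection.
by apply: eq_integral => y _; apply: mu01; exact: measurable_ysection.
Qed.

Lemma product_measure_balanced_r (E : set (T' * T)) : measurable E ->
  (nu \x mu0) E + (nu \x mu1) E = 2%:E * (nu \x mu) E.
Proof.
move=> mE; rewrite /product_measure1 /=.
rewrite -ge0_integralD//; [|exact: measurable_fun_xsection..].
rewrite -ge0_integralZl//; last exact: measurable_fun_xsection.
by apply: eq_integral => x _; apply: mu01; exact: measurable_xsection.
Qed.

End balanced_decomposition.

Lemma product_measure_balanced_eq (R : realType) d (T : measurableType d)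
  (mu mu0 mu1 nu0 nu1 : probability T R) (E : set (T * T)) : measurable E ->
  (forall A, measurable A -> (mu \x mu) (E `&` A `*` setT) = mu A * (mu \x mu) E) ->
  (forall A, measurable A -> (mu \x mu) (E `&` setT `*` A) = mu A * (mu \x mu) E) ->
  balanced_decomp mu mu0 mu1 -> balanced_decomp mu nu0 nu1 ->
  (mu0 \x nu0) E = (mu1 \x nu1) E.
Proof.
move=> mE indepx indepy mu01 nu01; set c := (mu \x mu) E.
have mu_nu0 : (mu \x nu0) E = c.
  apply: (product_measure_ae_ysection mE (balanced_decomp_dominates nu01)).
  exact: (ae_ysection_cst mE indepy).
have mu1_mu : (mu1 \x mu) E = c.
  apply: (product_measure_ae_xsection mE _ (ae_xsection_cst mE indepx)).
  exact: (balanced_decomp_dominates (balanced_decompC mu01)).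
have h0 : (mu0 \x nu0) E + (mu1 \x nu0) E = 2%:E * c.
  by rewrite (product_measure_balanced_l mu01)// mu_nu0.
have h1 : (mu1 \x nu1) E + (mu1 \x nu0) E = 2%:E * c.
  by rewrite addeC (product_measure_balanced_r nu01)// mu1_mu.
have fin : (mu1 \x nu0) E \is a fin_num.
  by rewrite ge0_fin_numE// (le_lt_trans (probability_le1 _ mE)) ?ltry.
by rewrite -[LHS](addeK _ fin) h0 -h1 addeK.
Qed.

Section independent_pairs.
Context (R : realType) (dO : measure_display) (O : measurableType dO)
  (P : probability O R).

Lemma indep2C d1 d2 (T1 : measurableType d1) (T2 : measurableType d2)
  (X : O -> T1) (Y : O -> T2) : indep2 P X Y -> indep2 P Y X.
Proof. by move=> hXY A B mA mB; rewrite setIC hXY// muleC. Qed.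

Lemma indep2_pair_law d1 d2 (T1 : measurableType d1) (T2 : measurableType d2)
  (X : {mfun O >-> T1}) (Y : {mfun O >-> T2})
  (m1 : probability T1 R) (m2 : probability T2 R) (E : set (T1 * T2)) :
  has_law P X m1 -> has_law P Y m2 -> indep2 P X Y -> measurable E ->
  P ((fun w => (X w, Y w)) @^-1` E) = (m1 \x m2) E.
Proof.
move=> hX hY hXY mE; have mXY : measurable_fun setT (fun w => (X w, Y w)).
  by apply: measurable_fun_pair; exact: measurable_funP.
rewrite (@product_measure_unique _ _ _ _ _ m1 m2 (pushforward P (fun w => (X w, Y w))))//.
by move=> A B mA mB; rewrite /pushforward /= -hX// -hY// -hXY.
Qed.

Lemma iid_pair_lawC d (T : measurableType d) (mu : probability T R)
  (X Y : {mfun O >-> T}) (E : set (T * T)) :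
  has_law P X mu -> has_law P Y mu -> indep2 P X Y -> measurable E ->
  P ((fun w => (X w, Y w)) @^-1` E) = P ((fun w => (Y w, X w)) @^-1` E).
Proof.
move=> hX hY hXY mE.
by rewrite (indep2_pair_law hX hY hXY mE) (indep2_pair_law hY hX (indep2C hXY) mE).
Qed.

End independent_pairs.

Section antisymmetric_kernel.
Context (R : realType) d (T : measurableType d) (mu : probability T R)
  dM (M : measurableType dM) (f : T * T -> M) (i : M -> M).
Hypotheses (mf : measurable_fun setT f) (mi : measurable_fun setT i).
Hypotheses (ii : involutive i) (fanti : forall x y, f (x, y) = i (f (y, x))).
Context dO (O : measurableType dO) (P : probability O R) (X Y : {mfun O >-> T}).
Hypotheses (hX : has_law P X mu) (hY : has_law P Y mu) (hXY : indep2 P X Y).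

Let F w := f (X w, Y w).

Lemma measure_XF_swap A B : measurable A -> measurable B ->
  P (X @^-1` A `&` F @^-1` B) = P (Y @^-1` A `&` F @^-1` (i @^-1` B)).
Proof.
move=> mA mB.
have mE : measurable (A `*` setT `&` f @^-1` B).
  by apply: measurableI; [exact: measurableX | exact: measurable_preimage].
have -> : X @^-1` A `&` F @^-1` B = (fun w => (X w, Y w)) @^-1` (A `*` setT `&` f @^-1` B).
  by apply/seteqP; split => w /=; [move=> [? ?] | move=> [[? _] ?]].
rewrite (iid_pair_lawC hX hY hXY mE); congr (P _); apply/seteqP.
by split => w /=; rewrite /F fanti; [move=> [[? _] ?] | move=> [? ?]].
Qed.

Lemma measure_F_swap B : measurable B -> P (F @^-1` B) = P (F @^-1` (i @^-1` B)).
Proof.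
by move=> mB; have := measure_XF_swap measurableT mB; rewrite !preimage_setT !setTI.
Qed.

Lemma indep2_FY_XF : indep2 P F Y -> indep2 P X F.
Proof.
move=> hFY A B mA mB; have miB := measurable_preimage mi mB.
by rewrite measure_XF_swap// setIC hFY// -measure_F_swap// hX// -hY// muleC.
Qed.

Lemma indep2_XF_FY : indep2 P X F -> indep2 P F Y.
Proof.
move=> hXF B A mB mA; have miB := measurable_preimage mi mB.
have iiB : i @^-1` (i @^-1` B) = B by apply/seteqP; split => m /=; rewrite ii.
rewrite setIC; have := measure_XF_swap mA miB; rewrite iiB => <-.
by rewrite hXF// -measure_F_swap// hX// -hY// muleC.
Qed.

End antisymmetric_kernel.

Section pairwise_independent_kernel.
Context (R : realType) d (T : measurableType d) (mu : probability T R)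
  dM (M : measurableType dM) (f : T * T -> M) (mf : measurable_fun setT f).
Context dO (O : measurableType dO) (P : probability O R) (X Y : {mfun O >-> T}).
Hypotheses (hX : has_law P X mu) (hY : has_law P Y mu) (hXY : indep2 P X Y).

Let F w := f (X w, Y w).

Lemma indep2_XF_product B A : indep2 P X F -> measurable B -> measurable A ->
  (mu \x mu) (f @^-1` B `&` A `*` setT) = mu A * (mu \x mu) (f @^-1` B).
Proof.
move=> hXF mB mA; have mfB := measurable_preimage mf mB.
rewrite -!(indep2_pair_law hX hY hXY)//; last first.
  by apply: measurableI => //; exact: measurableX.
rewrite -hX// -hXF//; congr (P _).
by apply/seteqP; split => w /=; [move=> [? [? _]] | move=> [? ?]].
Qed.

Lemma indep2_YF_product B A : indep2 P Y F -> measurable B -> measurable A ->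
  (mu \x mu) (f @^-1` B `&` setT `*` A) = mu A * (mu \x mu) (f @^-1` B).
Proof.
move=> hYF mB mA; have mfB := measurable_preimage mf mB.
rewrite -!(indep2_pair_law hX hY hXY)//; last first.
  by apply: measurableI => //; exact: measurableX.
rewrite -hY// -hYF//; congr (P _).
by apply/seteqP; split => w /=; [move=> [? [_ ?]] | move=> [? ?]].
Qed.

Lemma indep2_F_same_law : indep2 P X F -> indep2 P Y F ->
  forall (mu0 mu1 nu0 nu1 : probability T R),
  balanced_decomp mu mu0 mu1 -> balanced_decomp mu nu0 nu1 ->
  forall (e0 : measure_display) (O0 : measurableType e0)
    (P0 : probability O0 R) (X0 Y0 : {mfun O0 >-> T})
    (e1 : measure_display) (O1 : measurableType e1)
    (P1 : probability O1 R) (X1 Y1 : {mfun O1 >-> T}),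
    has_law P0 X0 mu0 -> has_law P0 Y0 nu0 -> indep2 P0 X0 Y0 ->
    has_law P1 X1 mu1 -> has_law P1 Y1 nu1 -> indep2 P1 X1 Y1 ->
    same_law P0 P1 (fun w => f (X0 w, Y0 w)) (fun w => f (X1 w, Y1 w)).
Proof.
move=> hXF hYF mu0 mu1 nu0 nu1 mu01 nu01 e0 O0 P0 X0 Y0 e1 O1 P1 X1 Y1
  hX0 hY0 hXY0 hX1 hY1 hXY1 B mB.
have mfB := measurable_preimage mf mB.
rewrite [LHS](indep2_pair_law hX0 hY0 hXY0 mfB) [RHS](indep2_pair_law hX1 hY1 hXY1 mfB).
apply: product_measure_balanced_eq mu01 nu01 => // A mA.
- exact: indep2_XF_product.
- exact: indep2_YF_product.
Qed.

End pairwise_independent_kernel.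

Local Close Scope ereal_scope.

Theorem corollary4p1 (R : realType) (d : measure_display)
  (T : measurableType d) (mu : probability T R)
  (dM : measure_display) (M : measurableType dM)
  (f : T * T -> M) (i : M -> M)
  (mf : measurable_fun [set: T * T] f) (mi : measurable_fun [set: M] i)
  (ii : forall m, i (i m) = m)
  (fanti : forall x y, f (x, y) = i (f (y, x))) :
  (* (1) *)
  (forall (dO : measure_display) (O : measurableType dO) (P : probability O R)
     (X Y : {mfun O >-> T}),
     has_law P X mu -> has_law P Y mu -> indep2 P X Y ->
     indep2 P (fun w => f (X w, Y w)) Y ->
     indep2 P X (fun w => f (X w, Y w)) /\
     pairwise_indep3 P X Y (fun w => f (X w, Y w))) /\
  (* (2) *)
  (forall (dO : measure_display) (O : measurableType dO) (P : probability O R)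
     (X Y : {mfun O >-> T}),
     has_law P X mu -> has_law P Y mu -> indep2 P X Y ->
     indep2 P X (fun w => f (X w, Y w)) ->
     indep2 P (fun w => f (X w, Y w)) Y /\
     pairwise_indep3 P X Y (fun w => f (X w, Y w))) /\
  (* Moreover: pairwise independence implies (Hex') and (Hex'') *)
  (forall (dO : measure_display) (O : measurableType dO) (P : probability O R)
     (X Y : {mfun O >-> T}),
     has_law P X mu -> has_law P Y mu ->
     pairwise_indep3 P X Y (fun w => f (X w, Y w)) ->
     (* (Hex') *)
     (forall (mu0 mu1 : probability T R), balanced_decomp mu mu0 mu1 ->
      forall (e0 : measure_display) (O0 : measurableType e0)
        (P0 : probability O0 R) (X0 Y0 : {mfun O0 >-> T})
        (e1 : measure_display) (O1 : measurableType e1)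
        (P1 : probability O1 R) (X1 Y1 : {mfun O1 >-> T}),
        has_law P0 X0 mu0 -> has_law P0 Y0 mu0 -> indep2 P0 X0 Y0 ->
        has_law P1 X1 mu1 -> has_law P1 Y1 mu1 -> indep2 P1 X1 Y1 ->
        same_law P0 P1 (fun w => f (X0 w, Y0 w)) (fun w => f (X1 w, Y1 w))) /\
     (* (Hex'') *)
     (forall (mu0 mu1 nu0 nu1 : probability T R),
      balanced_decomp mu mu0 mu1 -> balanced_decomp mu nu0 nu1 ->
      forall (e0 : measure_display) (O0 : measurableType e0)
        (P0 : probability O0 R) (X0 Y0 : {mfun O0 >-> T})
        (e1 : measure_display) (O1 : measurableType e1)
        (P1 : probability O1 R) (X1 Y1 : {mfun O1 >-> T}),
        has_law P0 X0 mu0 -> has_law P0 Y0 nu0 -> indep2 P0 X0 Y0 ->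
        has_law P1 X1 mu1 -> has_law P1 Y1 nu1 -> indep2 P1 X1 Y1 ->
        same_law P0 P1 (fun w => f (X0 w, Y0 w)) (fun w => f (X1 w, Y1 w)))).
Proof.
split; [|split].
- move=> dO O P X Y hX hY hXY hFY.
  have hXF := indep2_FY_XF mf mi fanti hX hY hXY hFY.
  by split=> //; split=> //; exact: indep2C.
- move=> dO O P X Y hX hY hXY hXF.
  have hFY := indep2_XF_FY mf mi ii fanti hX hY hXY hXF.
  by split=> //; split=> //; exact: indep2C.
- move=> dO O P X Y hX hY [hXY hXF hYF].
  have same_law_f := indep2_F_same_law mf hX hY hXY hXF hYF.
  by split=> // mu0 mu1 mu01; exact: same_law_f.
Qed.
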